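(* Let $\mathcal{G}=(\mathcal{V},E)$ be an undirected graph with $\mathcal{V}=\{1,\dots,N\}$ and set of cliques $\mathcal{C}$. For each $i\in\mathcal{V}$ let $\mathcal{X}_i$ be a finite alphabet and $g_i:\mathcal{X}_i\to\mathcal{Y}_i$ a function. Let $X=(X_1,\dots,X_N)$ be a random variable on $\mathcal{X}=\prod_i\mathcal{X}_i$ with $p_X(x)>0$ for all $x\in\mathcal{X}$, and suppose there is a family of potential functions $\{\psi_C,\ C\in\mathcal{C}\}$, $\psi_C:\mathcal{X}_C\to\mathbb{R}$, with $$p_X(x)=\frac{1}{Z}\prod_{C\in\mathcal{C}}\psi_C(x)\ \text{ for all } x\in\mathcal{X},\qquad Z=\sum_{x\in\mathcal{X}}\prod_{C\in\mathcal{C}}\psi_C(x).$$ Let $Y=(g_1(X_1),\dots,g_N(X_N))=g(X)$. Assume that for every $i\in\mathcal{V}$ there is at most one clique $C\ni i$ such that $\psi_C$ strictly depends on $x_i$. For each $i$ let $C'(i)$ be that clique (or, if no potential strictly depends on $x_i$, an arbitrary clique containing $i$), and let $\mathcal{V}_1,\dots,\mathcal{V}_L$ be the partition of $\mathcal{V}$ into classes of vertices having the same $C'(i)$; write $C'(\mathcal{V}_\ell)$ for the common clique of class $\mathcal{V}_\ell$. Then $Y$ is a Markov random field on $\mathcal{G}$. Moreover, $p_Y(y)=\frac{1}{Z}\prod_{C\in\mathcal{C}}U_C(y)$ for all $y$ in the image of $g$, where the functions $U_C$ are defined by $$U_{C'(\mathcal{V}_\ell)}(g(x))=\sum_{x'_{\mathcal{V}_\ell}\in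 g_{\mathcal{V}_\ell}^{-1}(g_{\mathcal{V}_\ell}(x_{\mathcal{V}_\ell}))}\psi_{C'(\mathcal{V}_\ell)}(x'_{\mathcal{V}_\ell},x_{\mathcal{V}\setminus\mathcal{V}_\ell}),\quad \ell=1,\dots,L,$$ and $U_C(g(x))=\psi_C(x)$ for all $C\in\mathcal{C}\setminus\bigcup_{j\in\mathcal{V}}\{C'(j)\}$ (these definitions are well posed, i.e., the right-hand sides depend on $x$ only through $g(x)$).
   Context: A clique is a singleton or a set $C\subseteq\mathcal{V}$ with all pairs of its elements joined by edges. For $A\subseteq\mathcal{V}$, $x_A=(x_i,i\in A)$, $\mathcal{X}_A=\prod_{i\in A}\mathcal{X}_i$, $g_A(x_A)=(g_i(x_i),i\in A)$; a potential $\psi_A$ on $\mathcal{X}_A$ is regarded as a function on $\mathcal{X}$ via $\psi_A(x)=\psi_A(x_A)$. $X$ is a Markov random field (MRF) on $\mathcal{G}$ if for every $i$, $p_{X_i|X_{\mathcal{V}\setminus\{i\}}}=p_{X_i|X_{\mathcal{N}_i}}$, where $\mathcal{N}_i$ is the set of neighbors of $i$. For a clique $C$ containing $i$, $\psi_C$ depends on $x_i$ only via $y_i=g_i(x_i)$ if $\psi_C(x_{\mathcal{V}\setminus\{i\}},x_i)=\psi_C(x_{\mathcal{V}\setminus\{i\}},x_i')$ for all $x_{\mathcal{V}\setminus\{i\}}$ and all $x_i,x_i'$ with $g_i(x_i)=g_i(x_i')$; otherwise $\psi_C$ strictly depends on $x_i$. *)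

From mathcomp Require Import all_boot all_order all_algebra.
Set Implicit Arguments. Unset Strict Implicit. Unset Printing Implicit Defensive.
Import Order.TTheory GRing.Theory Num.Theory.
Local Open Scope ring_scope.

Section MRF.
Variable N : nat.

(* Undirected simple graph on V = 'I_N (vertices 1..N renumbered 0..N-1),
   given by an adjacency relation (symmetry/irreflexivity are hypotheses). *)

Definition is_clique (adj : rel 'I_N) (C : {set 'I_N}) : bool :=
  (C != set0) && [forall i in C, forall j in C, (i != j) ==> adj i j].

Definition nbrs (adj : rel 'I_N) (i : 'I_N) : {set 'I_N} := [set j | adj i j].

Definition prob {R : numDomainType} {Om : finType} (p : Om -> R) (E : pred Om) : R :=
  \sum_(w | E w) p w.

Definition agree {Om : Type} {Y : 'I_N -> eqType} (Z : forall j, Om -> Y j)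
  (A : {set 'I_N}) (y : forall j, Y j) : pred Om :=
  fun w => [forall j in A, Z j w == y j].

(* The random field (Z_1,..,Z_N) on the finite probability space (Om,p) is a
   Markov random field on the graph: for every i,
   p_{Z_i | Z_{V\{i}}} = p_{Z_i | Z_{N_i}} (wherever the conditioning event
   has positive probability). *)
Definition is_MRF {R : numFieldType} (adj : rel 'I_N) {Om : finType}
  (p : Om -> R) {Y : 'I_N -> eqType} (Z : forall j, Om -> Y j) : Prop :=
  forall (i : 'I_N) (y : forall j, Y j),
    0 < prob p (agree Z [set~ i] y) ->
    prob p (agree Z setT y) / prob p (agree Z [set~ i] y)
    = prob p (agree Z (i |: nbrs adj i) y) / prob p (agree Z (nbrs adj i) y).

Definition local_to {R : Type} {X : 'I_N -> finType}
  (C : {set 'I_N}) (psi : {dffun forall i, X i} -> R) : Prop :=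
  forall x x' : {dffun forall i, X i}, (forall j, j \in C -> x j = x' j) ->
    psi x = psi x'.

Definition depends_only_via {R : Type} {X : 'I_N -> finType} {Y : 'I_N -> eqType}
  (g : forall i, X i -> Y i) (i : 'I_N) (psi : {dffun forall i, X i} -> R) : Prop :=
  forall x x' : {dffun forall i, X i}, (forall j, j != i -> x j = x' j) ->
    g i (x i) = g i (x' i) -> psi x = psi x'.

Definition strictly_depends {R : Type} {X : 'I_N -> finType} {Y : 'I_N -> eqType}
  (g : forall i, X i -> Y i) (i : 'I_N) (psi : {dffun forall i, X i} -> R) : Prop :=
  ~ depends_only_via g i psi.

Definition gmap {X : 'I_N -> finType} {Y : 'I_N -> eqType}
  (g : forall i, X i -> Y i) (x : {dffun forall i, X i}) : forall i, Y i :=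
  fun i => g i (x i).

End MRF.

From mathcomp Require Import all_boot all_order all_algebra.
From Stdlib Require Import Classical_Prop.
Import Order.TTheory GRing.Theory Num.Theory.
Local Open Scope ring_scope.

(* On a coordinate k, a clique potential psi_C with
   C <> C'(k) depends on x_k only through g_k(x_k) (locality when k \notin C,
   the uniqueness hypothesis otherwise).  Hence, when the Gibbs product is
   summed over a fiber of g, each psi_C only feels the coordinates of its block
   {k | C'(k) = C}, and the sum splits into the product over cliques of the
   block sums U_C; each U_C depends on x only through g on C.
   For the Markov property, spread the mass of each fiber uniformly over it.
   The resulting mass q gives every event about Y its probability and is a
   product of g-local clique potentials divided by the fiber size, so q u * q v
   is unchanged by exchanging the i-th coordinates of u and v when their
   images agree on the neighbours of i.  That exchange
   maps {Y = y} x {Y_Ni = y_Ni} onto {Y_(i,Ni) = y} x {Y_-i = y}, whence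
   P(Y = y) P(Y_Ni = y_Ni) = P(Y_(i,Ni) = y_(i,Ni)) P(Y_-i = y_-i). *)

Lemma sum_mul_swap {R : comPzSemiRingType} {T : finType} (s : T * T -> T * T)
    (W : T -> R) (P1 P2 Q1 Q2 : pred T) :
  injective s ->
  (forall p, P1 (s p).1 && P2 (s p).2 = Q1 p.1 && Q2 p.2) ->
  (forall p, Q1 p.1 -> Q2 p.2 -> W (s p).1 * W (s p).2 = W p.1 * W p.2) ->
  (\sum_(x | P1 x) W x) * (\sum_(x | P2 x) W x) =
  (\sum_(x | Q1 x) W x) * (\sum_(x | Q2 x) W x).
Proof.
move=> s_inj sP sW; rewrite !big_distrlr !pair_big_dep (reindex_inj s_inj) /=.
apply: eq_big => p; first exact: sP.
by rewrite sP => /andP[]; exact: sW.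
Qed.

Lemma prob_saturated {R : numFieldType} {T : finType} (e : rel T) (p : T -> R)
    (E : pred T) :
  equivalence_rel e -> (forall u v, e u v -> E u = E v) ->
  prob p E = \sum_(x | E x) prob p (e x) / #|e x|%:R.
Proof.
move=> /equivalence_relP[e_refl e_ltr] E_sat; rewrite /prob.
under [RHS]eq_bigr => x _ do rewrite mulr_suml.
rewrite (exchange_big_dep E) /=; last by move=> x w Ex /E_sat <-.
apply: eq_bigr => w Ew.
have e_sym u v : e u v -> e v u by move=> /e_ltr euv; rewrite -euv e_refl.
rewrite (eq_bigr (fun _ => p w / #|e w|%:R)); last first.
  by move=> x /andP[_ /e_ltr exw]; rewrite (eq_card exw).
rewrite (eq_bigl (e w)) => [|x]; last first.
  apply/andP/idP => [[_ /e_sym//]|/e_sym exw].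
  by rewrite (E_sat x w).
rewrite sumr_const -[_ *+ _]mulr_natr divfK // pnatr_eq0 -lt0n.
by apply/card_gt0P; exists w; exact: e_refl.
Qed.

Section Configurations.
Context {N : nat} {X : 'I_N -> finType}.
Local Notation cfg := {dffun forall i, X i}.

Definition patch (P : pred 'I_N) (x y : cfg) : cfg :=
  [ffun k => if P k then y k else x k].

Lemma patchE P x y k : patch P x y k = if P k then y k else x k.
Proof. by rewrite ffunE. Qed.

Definition swap_at (i : 'I_N) (uv : cfg * cfg) : cfg * cfg :=
  (patch (pred1 i) uv.2 uv.1, patch (pred1 i) uv.1 uv.2).

Lemma swap_atK i : involutive (swap_at i).
Proof.
by case=> u v; rewrite /swap_at /=; congr pair; apply/ffunP => k;
  rewrite !patchE /=; case: (k == i).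
Qed.

Lemma eq_coordinatewise {T : Type} (f : cfg -> T)
    (E : forall k, X k -> X k -> Prop) :
  (forall k (x x' : cfg), (forall j, j != k -> x j = x' j) ->
     E k (x k) (x' k) -> f x = f x') ->
  forall x x' : cfg, (forall k, E k (x k) (x' k)) -> f x = f x'.
Proof.
move=> f_step x x' xEx'.
suff f_eq s : uniq s -> forall y : cfg, (forall k, k \notin s -> y k = x' k) ->
    (forall k, k \in s -> E k (y k) (x' k)) -> f y = f x'.
  by apply: (f_eq (enum 'I_N)) => [|k|k _]; rewrite ?enum_uniq ?mem_enum.
elim: s => [|a s IHs] /= => [_ y yx' _|/andP[a_s s_uniq] y yx' yEx'].
  by congr f; apply/ffunP => k; exact: yx'.
have step : f y = f (patch (pred1 a) y x').
  apply: (f_step a) => [j /negbTE ja|]; rewrite patchE /= ?ja ?eqxx //.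
  by apply: yEx'; rewrite mem_head.
rewrite step; apply: IHs => // [k ks|k ks]; rewrite patchE /=.
  by case: eqP => // ka; apply: yx'; rewrite in_cons negb_or ks andbT; apply/eqP.
have /negbTE -> : k != a by apply: contraNneq a_s => <-.
by apply: yEx'; rewrite in_cons ks orbT.
Qed.

Lemma sum_prod_blocks {R : comPzSemiRingType} {I : finType} (b : 'I_N -> I)
    (P : pred I) (A : forall k, pred (X k)) (x0 : cfg) (F : I -> cfg -> R) :
  (forall k, P (b k)) ->
  (forall i (x : cfg), P i -> (forall k, A k (x k)) ->
     F i (patch (fun k => b k == i) x0 x) = F i x) ->
  \sum_(x : cfg | [forall k, A k (x k)]) \prod_(i | P i) F i x =
  \prod_(i | P i)
     \sum_(x : cfg | [forall k, if b k == i then A k (x k) else x k == x0 k]) F i x.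
Proof.
move=> Pb F_block; rewrite (big_distr_big_dep x0).
pose split (x : cfg) := [ffun i => patch (fun k => b k == i) x0 x].
pose glue (f : {ffun I -> cfg}) : cfg := [ffun k => f (b k) k].
rewrite (reindex_onto split glue) /=; last first.
  move=> f /pfamilyP[f_supp f_fam]; apply/ffunP => i; apply/ffunP => k.
  rewrite !ffunE; case: eqP => [<- //|bki].
  case Pi: (P i); last first.
    have /eqP -> // : f i == x0.
    by apply: contraFT Pi => fi; apply: (subsetP f_supp); rewrite inE.
  by have /forallP/(_ k) := f_fam i Pi; rewrite (introF eqP bki) => /eqP.
rewrite {}/split {}/glue; apply: eq_big => [x|x /forallP xA]; last first.
  by apply: eq_bigr => i Pi; rewrite ffunE F_block.
apply/forallP/andP => [xA|[/pfamilyP[_ x_fam] _] k]; last first.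
  by have /forallP/(_ k) := x_fam (b k) (Pb k); rewrite eqxx ffunE patchE eqxx.
split; last by apply/eqP/ffunP => k; rewrite !ffunE /= eqxx.
apply/pfamilyP; split=> [|i Pi].
  apply/subsetP => i; rewrite inE; apply: contraR => Pi.
  apply/eqP/ffunP => k; rewrite ffunE patchE.
  by case: eqP => // bki; case/negP: Pi; rewrite -bki; apply: Pb.
rewrite unfold_in ffunE; apply/forallP => k.
by rewrite patchE /=; case: eqP => // _; exact: xA.
Qed.

End Configurations.

Section Fibers.
Context {N : nat} {X : 'I_N -> finType} {Y : 'I_N -> eqType}.
Variable g : forall i, X i -> Y i.
Local Notation cfg := {dffun forall i, X i}.

Definition fiber (x : cfg) : pred cfg :=
  fun x' : cfg => [forall k, g k (x' k) == g k (x k)].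

Lemma fiber_equiv : equivalence_rel fiber.
Proof.
move=> x y z; split; first by apply/forallP.
move=> /forallP yx; apply/forallP/forallP => zf k; move: (zf k);
  by rewrite (eqP (yx k)).
Qed.

Definition g_local {R : Type} (C : {set 'I_N}) (f : cfg -> R) : Prop :=
  forall x y : cfg, (forall k, k \in C -> g k (x k) = g k (y k)) -> f x = f y.

Lemma card_fiber_swap i u v :
  (#|fiber (swap_at i (u, v)).1| * #|fiber (swap_at i (u, v)).2| =
   #|fiber u| * #|fiber v|)%N.
Proof.
rewrite -!sum1_card.
apply: (sum_mul_swap (swap_at i) (fun=> 1%N) (fiber _) (fiber _) (fiber u)
  (fiber v) (can_inj (swap_atK i))) => // -[a b] /=.
apply/andP/andP => -[/forallP au /forallP bv]; split; apply/forallP => k;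
  move: (au k) (bv k); rewrite !patchE /=; case: (k == i) => //= h1 h2;
  by rewrite ?h1 ?h2.
Qed.

End Fibers.

Section MarkovFromSwap.
Context {R : numFieldType} {N : nat} {adj : rel 'I_N}.
Context {X : 'I_N -> finType} {Y : 'I_N -> eqType} (g : forall i, X i -> Y i).
Hypothesis adj_irr : irreflexive adj.
Local Notation cfg := {dffun forall i, X i}.
Local Notation gX := (fun j (x : cfg) => g j (x j)).

Lemma nbrs_neq {i j : 'I_N} : j \in nbrs adj i -> j != i.
Proof. by rewrite inE; apply: contraTneq => ->; rewrite adj_irr. Qed.

Lemma clique_sub_nbrs C i k :
  is_clique adj C -> i \in C -> k \in C -> k != i -> k \in nbrs adj i.
Proof.
case/andP=> _ /forallP/(_ i)/implyP C_adj iC kC ki.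
by have /forallP/(_ k) := C_adj iC; rewrite kC eq_sym ki inE.
Qed.

Lemma agree_swap_at i y (uv : cfg * cfg) :
  agree gX setT y (swap_at i uv).1 && agree gX (nbrs adj i) y (swap_at i uv).2 =
  agree gX (i |: nbrs adj i) y uv.1 && agree gX [set~ i] y uv.2.
Proof.
case: uv => u v; apply/andP/andP => -[/forallP h1 /forallP h2].
  split; apply/forallP => j; apply/implyP => jA.
    have [->|ji] := eqVneq j i.
      by have := h1 i; rewrite in_setT patchE /= eqxx.
    have jN : j \in nbrs adj i by move: jA; rewrite in_setU1 (negbTE ji).
    by have := h2 j; rewrite jN patchE /= (negbTE ji).
  by have := h1 j; rewrite in_setT patchE /= ifN // -in_setC1.
split; apply/forallP => j; apply/implyP => jA; rewrite patchE /=.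
  have [->|ji] := eqVneq j i; first by have := h1 i; rewrite setU11.
  by have := h2 j; rewrite in_setC1 ji.
by have := h1 j; rewrite (negbTE (nbrs_neq jA)) (setU1r _ jA).
Qed.

Lemma prod_clique_swap (phi : {set 'I_N} -> cfg -> R) i (u v : cfg) :
  (forall C, is_clique adj C -> g_local g C (phi C)) ->
  (forall k, k \in nbrs adj i -> g k (u k) = g k (v k)) ->
  (\prod_(C | is_clique adj C) phi C (swap_at i (u, v)).1) *
    \prod_(C | is_clique adj C) phi C (swap_at i (u, v)).2 =
  (\prod_(C | is_clique adj C) phi C u) * \prod_(C | is_clique adj C) phi C v.
Proof.
move=> phi_local uv_nbrs; rewrite -!big_split /=; apply: eq_bigr => C cC.
have [iC|iNC] := boolP (i \in C).
  congr (_ * _); apply: phi_local => // k kC; rewrite patchE /=;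
    case: eqP => // /eqP ki; rewrite uv_nbrs //; exact: clique_sub_nbrs iC kC ki.
rewrite mulrC; congr (_ * _); apply: phi_local => // k kC; rewrite patchE /=.
  by rewrite ifN //; apply: contraNneq iNC => <-.
by rewrite ifN //; apply: contraNneq iNC => <-.
Qed.

Lemma is_MRF_of_swap (p q : cfg -> R) :
  (forall x, 0 <= p x) ->
  (forall E : pred cfg, (forall u v, fiber g u v -> E u = E v) ->
     prob p E = prob q E) ->
  (forall i (u v : cfg), (forall k, k \in nbrs adj i -> g k (u k) = g k (v k)) ->
     q (swap_at i (u, v)).1 * q (swap_at i (u, v)).2 = q u * q v) ->
  is_MRF adj p gX.
Proof.
move=> p_ge0 pq q_swap i y Pni.
have agree_sat A u v : fiber g u v -> agree gX A y u = agree gX A y v.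
  by move=> /forallP uv; apply: eq_forallb => j; rewrite (eqP (uv j)).
have Pnbrs : 0 < prob p (agree gX (nbrs adj i) y).
  apply: (lt_le_trans Pni); rewrite /prob [leRHS](bigID (agree gX [set~ i] y)) /=.
  rewrite [X in _ <= X + _](eq_bigl (agree gX [set~ i] y)) => [|w].
    by rewrite lerDl sumr_ge0.
  apply/andP/idP => [[]//|w_ni]; split=> //; apply/forallP => j; apply/implyP => jN.
  by have /forallP/(_ j)/implyP := w_ni; apply; rewrite in_setC1 (nbrs_neq jN).
apply/eqP; rewrite (eqr_div _ _ (lt0r_neq0 Pni) (lt0r_neq0 Pnbrs)); apply/eqP.
rewrite !(pq _ (agree_sat _)) /prob.
apply: (sum_mul_swap (swap_at i) q (agree gX setT y) (agree gX (nbrs adj i) y)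
  (agree gX (i |: nbrs adj i) y) (agree gX [set~ i] y) (can_inj (swap_atK i))).
  exact: agree_swap_at.
move=> [u v] /forallP u_nbrs /forallP v_ni /=; apply: q_swap => k kN.
have /implyP/(_ (setU1r _ kN))/eqP -> := u_nbrs k.
by have /implyP/(_ _)/eqP -> := v_ni k; rewrite // in_setC1 (nbrs_neq kN).
Qed.

End MarkovFromSwap.

Section Potentials.
Context {R : numFieldType} {N : nat} {adj : rel 'I_N}.
Context {X : 'I_N -> finType} {Y : 'I_N -> eqType} {g : forall i, X i -> Y i}.
Context {psi : {set 'I_N} -> {dffun forall i, X i} -> R} {Cp : 'I_N -> {set 'I_N}}.
Local Notation cfg := {dffun forall i, X i}.
Hypothesis psi_local : forall C, is_clique adj C -> local_to C (psi C).
Hypothesis Cp_clique : forall i, is_clique adj (Cp i).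
Hypothesis Cp_mem : forall i, i \in Cp i.
Hypothesis Cp_strict : forall i C, is_clique adj C -> i \in C ->
  strictly_depends g i (psi C) -> C = Cp i.

Lemma psi_depends_only_via C k :
  is_clique adj C -> Cp k != C -> depends_only_via g k (psi C).
Proof.
move=> cC CpkC; have [kC|kNC] := boolP (k \in C).
  by apply: NNPP => strict; case/eqP: CpkC; apply/esym/Cp_strict.
move=> x x' xx' _; apply: psi_local => // j jC; apply: xx'.
by apply: contraNneq kNC => <-.
Qed.

Lemma psi_invariant C (x x' : cfg) : is_clique adj C ->
  (forall k, k \in C ->
     if Cp k == C then x k = x' k else g k (x k) = g k (x' k)) ->
  psi C x = psi C x'.
Proof.
move=> cC; apply: (eq_coordinatewise (psi C) (fun k a b =>
  k \in C -> if Cp k == C then a = b else g k a = g k b)) => k {}x {}x' xx' kE.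
have [kC|kNC] := boolP (k \in C); last first.
  by apply: psi_local => // j jC; apply: xx'; apply: contraNneq kNC => <-.
move: (kE kC); case: ifPn => [_ xk|CpkC]; last exact: psi_depends_only_via.
by congr psi; apply/ffunP => j; have [->|/xx'] := eqVneq j k.
Qed.

Definition block_fiber C (x x' : cfg) : bool :=
  [forall k, if Cp k == C then g k (x' k) == g k (x k) else x' k == x k].

Definition fiber_potential C (x : cfg) : R :=
  \sum_(x' | block_fiber C x x') psi C x'.

Lemma fiber_potential_local C : is_clique adj C -> g_local g C (fiber_potential C).
Proof.
move=> cC x y xy; pose blk k := Cp k == C.
rewrite /fiber_potential (reindex_onto (patch blk x) (patch blk y)) /=; last first.
  move=> x' /forallP x'x; apply/ffunP => k; rewrite !patchE /blk.
  by case: ifP => // nblk; have := x'x k; rewrite nblk => /eqP.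
apply: eq_big => [x'|x' /andP[_ /eqP yx']]; last first.
  apply: psi_invariant => // k kC; rewrite patchE /blk.
  case Cpk: (Cp k == C) => //; rewrite xy //.
  by have /(congr1 (fun z : cfg => z k)) := yx'; rewrite !patchE /blk Cpk => ->.
have blkC k : Cp k == C -> k \in C by move=> /eqP <-.
rewrite /block_fiber; apply/andP/forallP => [[/forallP x'x /eqP yx'] k|x'y].
  have := x'x k; have /(congr1 (fun z : cfg => z k)) := yx'; rewrite !patchE /blk.
  case Cpk: (Cp k == C); last by move=> <-.
  by move=> _; rewrite xy ?blkC.
split.
  apply/forallP => k; rewrite patchE /blk; have := x'y k.
  by case Cpk: (Cp k == C) => //; rewrite xy ?blkC.
apply/eqP/ffunP => k; rewrite !patchE /blk; have := x'y k.
by case Cpk: (Cp k == C) => // /eqP.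
Qed.

Lemma fiber_potential_nonblock C x :
  (forall j, C != Cp j) -> fiber_potential C x = psi C x.
Proof.
move=> CNCp; rewrite /fiber_potential (eq_bigl (pred1 x)) ?big_pred1_eq // => x'.
apply/forallP/eqP => [x'x|-> k]; last by rewrite eq_sym (negbTE (CNCp k)).
by apply/ffunP => k; have := x'x k; rewrite eq_sym (negbTE (CNCp k)) => /eqP.
Qed.

Lemma sum_fiber_prod_psi x :
  \sum_(x' | fiber g x x') \prod_(C | is_clique adj C) psi C x' =
  \prod_(C | is_clique adj C) fiber_potential C x.
Proof.
apply: (sum_prod_blocks Cp _ (fun k a => g k a == g k (x k))) => // C x' cC x'x.
apply: psi_invariant => // k _; rewrite patchE /=.
by case: (Cp k == C) => //; rewrite (eqP (x'x k)).
Qed.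

Context {pX : cfg -> R}.
Hypothesis pX_fact : forall x, pX x =
  (\sum_(x' : cfg) \prod_(C | is_clique adj C) psi C x')^-1 *
  \prod_(C | is_clique adj C) psi C x.

Lemma prob_fiber x : prob pX (fiber g x) =
  (\sum_(x' : cfg) \prod_(C | is_clique adj C) psi C x')^-1 *
  \prod_(C | is_clique adj C) fiber_potential C x.
Proof.
by rewrite /prob (eq_bigr _ (fun w _ => pX_fact w)) -big_distrr sum_fiber_prod_psi.
Qed.

Lemma is_MRF_image : irreflexive adj -> (forall x, 0 <= pX x) ->
  is_MRF adj pX (fun j (x : cfg) => g j (x j)).
Proof.
move=> adj_irr pX_ge0; pose q x := prob pX (fiber g x) / #|fiber g x|%:R.
apply: (is_MRF_of_swap g adj_irr pX q) => // [E E_sat|i u v uv_nbrs].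
  exact: prob_saturated (fiber_equiv g) E_sat.
have q_mul a b : q a * q b = prob pX (fiber g a) * prob pX (fiber g b) /
    (#|fiber g a| * #|fiber g b|)%N%:R by rewrite /q mulrACA -invfM natrM.
rewrite !q_mul card_fiber_swap !prob_fiber mulrACA [in RHS]mulrACA.
by rewrite (prod_clique_swap _ _ _ _ _ fiber_potential_local uv_nbrs).
Qed.

(* The value 0 off the image of g is arbitrary. *)
Definition image_potential C (y : forall i, Y i) : R :=
  if [pick x : cfg | [forall k, g k (x k) == y k]] is Some x
  then fiber_potential C x else 0.

Lemma image_potential_gmap C x :
  is_clique adj C -> image_potential C (gmap g x) = fiber_potential C x.
Proof.
move=> cC; rewrite /image_potential; case: pickP => [x0 /forallP x0x|none].
  by apply: fiber_potential_local => // k _; apply/eqP/x0x.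
by have /forallP[] := negbT (none x).
Qed.

End Potentials.

Theorem proposition1 (R : realFieldType) (N : nat) (adj : rel 'I_N)
  (adj_sym : symmetric adj) (adj_irr : irreflexive adj)
  (X : 'I_N -> finType) (Y : 'I_N -> eqType) (g : forall i, X i -> Y i)
  (pX : {dffun forall i, X i} -> R)
  (psi : {set 'I_N} -> {dffun forall i, X i} -> R)
  (psi_local : forall C, is_clique adj C -> local_to C (psi C))
  (pX_pos : forall x, 0 < pX x)
  (pX_fact : forall x, pX x =
      (\sum_(x' : {dffun forall i, X i}) \prod_(C | is_clique adj C) psi C x')^-1
      * \prod_(C | is_clique adj C) psi C x)
  (at_most_one : forall (i : 'I_N) (C1 C2 : {set 'I_N}),
      is_clique adj C1 -> is_clique adj C2 -> i \in C1 -> i \in C2 ->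
      strictly_depends g i (psi C1) -> strictly_depends g i (psi C2) -> C1 = C2)
  (Cp : 'I_N -> {set 'I_N})
  (Cp_clique : forall i, is_clique adj (Cp i))
  (Cp_mem : forall i, i \in Cp i)
  (Cp_strict : forall i C, is_clique adj C -> i \in C ->
      strictly_depends g i (psi C) -> C = Cp i) :
  is_MRF adj pX (fun j (x : {dffun forall i, X i}) => g j (x j)) /\
  exists U : {set 'I_N} -> (forall i, Y i) -> R,
    (forall (x : {dffun forall i, X i}) (j : 'I_N),
       U (Cp j) (gmap g x) =
       \sum_(x' : {dffun forall i, X i} |
               [forall k, if Cp k == Cp j then g k (x' k) == g k (x k)
                          else x' k == x k])
          psi (Cp j) x') /\
    (forall (x : {dffun forall i, X i}) (C : {set 'I_N}),
       is_clique adj C -> (forall j, C != Cp j) -> U C (gmap g x) = psi C x) /\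
    (forall x : {dffun forall i, X i},
       prob pX (fun x' : {dffun forall i, X i} => [forall k, g k (x' k) == g k (x k)])
       = (\sum_(x' : {dffun forall i, X i}) \prod_(C | is_clique adj C) psi C x')^-1
         * \prod_(C | is_clique adj C) U C (gmap g x)).
Proof.
split.
  exact: (is_MRF_image psi_local Cp_clique Cp_mem Cp_strict pX_fact adj_irr
    (fun x => ltW (pX_pos x))).
have U_gmap := image_potential_gmap psi_local Cp_mem Cp_strict.
exists (image_potential (g := g) (psi := psi) (Cp := Cp)); split; [|split].
- by move=> x j; rewrite U_gmap.
- by move=> x C cC CNCp; rewrite U_gmap // fiber_potential_nonblock.
- move=> x; rewrite (prob_fiber psi_local Cp_clique Cp_strict pX_fact).
  by congr (_ * _); apply: eq_bigr => C cC; rewrite U_gmap.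
Qed.
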